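(* Let $X$ be a decomposable continuum and $x\in X$ a null-aposyndetic point such that $X$ is not coastal at $x$. Then for every thick subcontinuum $T\subset X$, the set $\overline{X-T}$ is a thick subcontinuum of $X$.
   Context: A continuum is a nondegenerate compact connected Hausdorff space; it is decomposable if it is the union of two proper subcontinua. A subcontinuum is thick if it is proper and has nonempty interior. A point $x$ is null-aposyndetic if no proper subcontinuum of $X$ contains $x$ in its interior. $\kappa(x;p)$ is the union of all subcontinua $M\neq X$ with $x\in M$, $p\notin M$; $X$ is coastal at $x$ if $\kappa(x;p)$ is dense for some $p\neq x$. *)

From HB Require Import structures.
From mathcomp Require Import all_boot all_order all_algebra.
From mathcomp Require Import all_classical all_reals all_analysis.
Set Implicit Arguments. Unset Strict Implicit. Unset Printing Implicit Defensive.
Local Open Scope classical_set_scope.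

Section Continua.
Context {T : topologicalType}.

Definition is_continuum_space : Prop :=
  [/\ hausdorff_space T, compact [set: T], connected [set: T]
    & exists a b : T, a <> b].

Definition subcontinuum (M : set T) : Prop :=
  [/\ M !=set0, compact M & connected M].

Definition proper_subcontinuum (M : set T) : Prop :=
  subcontinuum M /\ M <> [set: T].

Definition decomposable : Prop :=
  exists A B : set T, [/\ proper_subcontinuum A, proper_subcontinuum B
                        & A `|` B = [set: T]].

Definition thick (M : set T) : Prop :=
  proper_subcontinuum M /\ (interior M) !=set0.

Definition null_aposyndetic (x : T) : Prop :=
  forall M : set T, proper_subcontinuum M -> ~ (interior M) x.

Definition kappa (x p : T) : set T :=
  \bigcup_(M in [set M : set T | [/\ subcontinuum M, M <> [set: T], M x & ~ M p]]) M.

Definition coastal_at (x : T) : Prop :=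
  exists p : T, p <> x /\ dense (kappa x p).

End Continua.

From HB Require Import structures.
From mathcomp Require Import all_boot all_order all_algebra.
From mathcomp Require Import all_classical all_reals all_analysis.
Set Implicit Arguments.
Unset Strict Implicit.
Unset Printing Implicit Defensive.
Local Open Scope classical_set_scope.

(* If cl(X - T) = P u Q were a
   separation, then T u P would be a proper subcontinuum (Kuratowski: a
   connected set together with one side of a separation of its complement is
   connected) whose interior contains the open set X - Q; so x lies in Q, and
   symmetrically in P, which is absurd.  Thickness of cl(X - T) is immediate:
   it contains the nonempty open set X - T and misses the interior of T. *)

Section separated_sets.
Context {T : topologicalType}.
Implicit Types A B C P Q : set T.

Lemma separatedSl A B C : A `<=` B -> separated B C -> separated A C.
Proof.
move=> AB [clBC BclC]; split; apply/disjoints_subset.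
- by apply: subset_trans (closureS AB) _; apply/disjoints_subset.
- by apply: subset_trans AB _; apply/disjoints_subset.
Qed.

Lemma separatedUl A B C :
  separated A C -> separated B C -> separated (A `|` B) C.
Proof.
move=> [clAC AclC] [clBC BclC].
by split; rewrite ?closureU setIUl ?clAC ?clBC ?AclC ?BclC setU0.
Qed.

Lemma separated_closedl P Q : closed (P `|` Q) -> separated P Q -> closed P.
Proof.
move=> closedPQ [clPQ _]; apply/closure_id/seteqP; split.
  exact: subset_closure.
move=> z clPz; have : (P `|` Q) z.
  by rewrite ((closure_id _).1 closedPQ); apply: closureS clPz; apply: subsetUl.
by case=> // Qz; move/disjoints_subset: clPQ => /(_ z clPz).
Qed.

Lemma connected_setU_separated A P Q : connected [set: T] -> connected A ->
  separated P Q -> A `|` P `|` Q = [set: T] -> connected (A `|` P).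
Proof.
move=> connT connA sPQ APQT; apply/connectedP => E [E0 APE sE].
wlog AE : E E0 APE sE / A `<=` E false.
  move=> wlogE; have [|AE|AE] := connected_subset sE _ connA.
  - by rewrite -APE; apply: subsetUl.
  - exact: wlogE.
  - by apply: (wlogE (E \o negb) _ _ _ AE);
      [move=> b; apply: E0 | rewrite APE setUC | rewrite separatedC].
have E1P : E true `<=` P.
  move=> z E1z; have : (A `|` P) z by rewrite APE; right.
  case=> // /AE E0z.
  by move/separated_disjoint/disjoints_subset: sE => /(_ z E0z).
apply: (connectedPn [set: T]).2 connT.
exists (fun b => if b then E true else E false `|` Q); split.
- case; first exact: E0.
  by have [z E0z] := E0 false; exists z; left.
- by rewrite -APQT APE setUAC.
- apply: separatedUl sE _; rewrite separatedC.
  exact: separatedSl E1P sPQ.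
Qed.

End separated_sets.

Section null_aposyndetic_point.
Context {T : topologicalType}.
Hypotheses (compactT : compact [set: T]) (connectedT : connected [set: T]).
Variables (x : T) (K : set T).
Hypotheses (nax : null_aposyndetic x) (closedK : closed K).
Hypotheses (connectedK : connected K) (K0 : K !=set0).

Lemma closure_setC_separation_mem P Q :
  closure (~` K) = P `|` Q -> separated P Q -> Q !=set0 -> Q x.
Proof.
move=> clKPQ sPQ [q Qq].
have closedPQ : closed (P `|` Q) by rewrite -clKPQ; apply: closed_closure.
have closedP := separated_closedl closedPQ sPQ.
have closedQ : closed Q.
  by apply: (separated_closedl (Q := P)); [rewrite setUC | rewrite separatedC].
have KPQT : K `|` P `|` Q = [set: T].
  rewrite -setUA -clKPQ; apply/seteqP; split=> // z _.
  by have [Kz|nKz] := pselect (K z); [left | right; apply: subset_closure].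
have KP_sub : subcontinuum (K `|` P).
  split.
  - by have [z Kz] := K0; exists z; left.
  - exact: subclosed_compact (closedU closedK closedP) compactT (subsetT _).
  - exact: connected_setU_separated connectedT connectedK sPQ KPQT.
have KP_proper : K `|` P <> [set: T].
  move=> KPT; have clKP : closure (~` K) `<=` P.
    rewrite [X in _ `<=` X]((closure_id _).1 closedP); apply: closureS.
    move=> z nKz; have : (K `|` P) z by rewrite KPT.
    by case.
  have Pq : P q by apply: clKP; rewrite clKPQ; right.
  by move/separated_disjoint/disjoints_subset: sPQ => /(_ q Pq).
apply: contrapT => nQx; apply: (nax (conj KP_sub KP_proper)).
have nQ_KP : ~` Q `<=` K `|` P.
  move=> z nQz; have : (K `|` P `|` Q) z by rewrite KPQT.
  by case.
apply: (interiorS nQ_KP).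
by rewrite ((interior_id _).1 (closed_openC closedQ)).
Qed.

Lemma connected_closure_setC : connected (closure (~` K)).
Proof.
apply/connectedP => E [E0 clKE sE].
move/separated_disjoint/disjoints_subset: (sE) => /(_ x); apply.
- apply: closure_setC_separation_mem (E0 false).
    by rewrite clKE setUC.
  by rewrite separatedC.
- exact: closure_setC_separation_mem clKE sE (E0 true).
Qed.

End null_aposyndetic_point.

Lemma thick_closure_setC (T : topologicalType) (x : T) (K : set T) :
  hausdorff_space T -> compact [set: T] -> connected [set: T] ->
  null_aposyndetic x -> thick K -> thick (closure (~` K)).
Proof.
move=> hausT compactT connectedT nax [[[K0 compactK connectedK] KT] [y Ky]].
have closedK : closed K := compact_closed hausT compactK.
have /setTPn[z nKz] : K != [set: T] by apply/eqP.
split; [split; [split|] |].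
- by exists z; apply: subset_closure.
- exact: subclosed_compact (@closed_closure _ _) compactT (subsetT _).
- exact: (connected_closure_setC compactT connectedT nax closedK connectedK K0).
- rewrite closure_setC => clT.
  by have : [set: T] y by []; rewrite -clT; apply.
- exists z; apply: (interiorS (@subset_closure _ (~` K))).
  by rewrite ((interior_id _).1 (closed_openC closedK)).
Qed.

Theorem mainTheorem20 (T : topologicalType) :
  @is_continuum_space T -> @decomposable T ->
  forall x : T, null_aposyndetic x -> ~ coastal_at x ->
  forall Tk : set T, thick Tk -> thick (closure (~` Tk)).
Proof.
move=> [hausT compactT connectedT _] _ x nax _ Tk.
exact: thick_closure_setC hausT compactT connectedT nax.
Qed.
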